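(* Let $\mathcal{T}_1,\mathcal{T}_2$ be locally finite trees in which every vertex has degree at least $3$, with base vertices $o^1,o^2$ and geodesic rays $\gamma^1\in\partial\mathcal{T}_1$, $\gamma^2\in\partial\mathcal{T}_2$. Then the Busemann compactification of the horospheric product $\mathcal{T}_1\uparrow\downarrow\mathcal{T}_2$ is isomorphic (as a compactification) to its height compactification. That is, there is a homeomorphism $\Theta$ from the height compactification onto the Busemann compactification with $\Theta(\Psi(\mathbf{x}))=\Phi(\mathbf{x})$ for every vertex $\mathbf{x}$ of $\mathcal{T}_1\uparrow\downarrow\mathcal{T}_2$. Equivalently, a sequence $(\mathbf{x}_n)$ of vertices of $\mathcal{T}_1\uparrow\downarrow\mathcal{T}_2$ has $\Psi(\mathbf{x}_n)$ convergent in the height compactification if and only if $\Phi(\mathbf{x}_n)$ converges in the Busemann compactification.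
   Context: For a locally finite tree $\mathcal{T}$ with graph metric $d$ and base vertex $o$: the geometric boundary $\partial\mathcal{T}$ is the set of infinite geodesic rays from $o$, i.e. sequences $(z_n)_{n\ge0}$ of vertices with $z_0=o$, $z_i,z_{i+1}$ adjacent, and $z_i,z_{i+1},z_{i+2}$ pairwise distinct. For a vertex $x$ and $\xi=(z_n)\in\partial\mathcal{T}$, $[o,x]_\xi$ denotes the vertex of $\xi$ lying on the geodesic $[o,x]$ that is farthest from $o$. The geometric compactification $\overline{\mathcal{T}}=\mathcal{T}\sqcup\partial\mathcal{T}$ has the following topology: vertices are isolated; a sequence of vertices $x_n$ converges to $\xi\in\partial\mathcal{T}$ iff $d(o,[o,x_n]_\xi)\to\infty$; $\partial\mathcal{T}$ carries the metric $2^{-N(\xi_1,\xi_2)}$, where $N(\xi_1,\xi_2)$ is the length of the common initial segment of $\xi_1,\xi_2$. For $\gamma\in\partial\mathcal{T}$ the height (Busemann) function is $\mathfrak{b}_\gamma(y)=d(y,[o,y]_\gamma)-d(o,[o,y]_\gamma)$. Horospheric product: given $(\mathcal{T}_i,o^i,\gamma^i)$, $i=1,2$, let $\mathfrak{h}_i=\mathfrak{b}_{\gamma^i}$ (height in $\mathcal{T}_i$ with base $o^i$). $\mathcal{T}_1\uparrow\downarrow\mathcal{T}_2$ is the graph with vertex set $\{(x^1,x^2)\in\mathcal{T}_1\times\mathcal{T}_2:\mathfrak{h}_1(x^1)+\mathfrak{h}_2(x^2)=0\}$, where $(x^1,x^2)$ and $(y^1,y^2)$ are adjacent iff $x^1\sim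 y^1$ in $\mathcal{T}_1$ and $x^2\sim y^2$ in $\mathcal{T}_2$; $d$ is its graph metric and $\mathbf{o}=(o^1,o^2)$. Busemann compactification: for a vertex $\mathbf{z}$ let $\mathfrak{b}_{\mathbf{z}}(\mathbf{y})=d(\mathbf{z},\mathbf{y})-d(\mathbf{z},\mathbf{o})$, and $\Phi(\mathbf{z})=\mathfrak{b}_{\mathbf{z}}$; the Busemann compactification is the closure of $\Phi(\mathcal{T}_1\uparrow\downarrow\mathcal{T}_2)$ in the space of real functions on the vertex set with the topology of pointwise convergence. Height compactification: let $\overline{\mathbb{Z}}=\mathbb{Z}\cup\{\pm\infty\}$ be the two-point compactification of $\mathbb{Z}$, and $\Psi(\mathbf{x})=(x^1,x^2,\mathfrak{h}_1(x^1))\in\overline{\mathcal{T}}_1\times\overline{\mathcal{T}}_2\times\overline{\mathbb{Z}}$; the height compactification is the closure of $\Psi(\mathcal{T}_1\uparrow\downarrow\mathcal{T}_2)$ in this product space. *)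

From Stdlib Require Import List ZArith Reals ClassicalEpsilon.
Import ListNotations.

(* [walk adj x l y] : x, l_1, ..., l_k is a walk whose last vertex is y
   (length k = length l). *)
Fixpoint walk {V : Type} (adj : V -> V -> Prop) (x : V) (l : list V) (y : V)
  : Prop :=
  match l with
  | [] => x = y
  | z :: l' => adj x z /\ walk adj z l' y
  end.

(* Graph metric: the least length of a walk from x to y
   (default value if x,y are not connected; never used for connected graphs). *)
Definition gdist {V : Type} (adj : V -> V -> Prop) (x y : V) : nat :=
  epsilon (inhabits 0%nat)
    (fun n => (exists l, walk adj x l y /\ length l = n) /\
              forall l, walk adj x l y -> (n <= length l)%nat).

Definition is_tree {V : Type} (adj : V -> V -> Prop) : Prop :=
  (forall x y, adj x y -> adj y x) /\
  (forall x, ~ adj x x) /\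
  (forall x y, exists l, walk adj x l y) /\
  (* no cycles: no closed walk x, l_1, ..., l_k, x with k >= 2 and
     x, l_1, ..., l_k pairwise distinct *)
  (forall x l, NoDup (x :: l) -> (2 <= length l)%nat ->
     walk adj x l (last l x) -> ~ adj (last l x) x).

Definition locally_finite {V : Type} (adj : V -> V -> Prop) : Prop :=
  forall x, exists s : list V, forall y, adj x y -> In y s.

Definition min_degree_ge3 {V : Type} (adj : V -> V -> Prop) : Prop :=
  forall x, exists a b c, adj x a /\ adj x b /\ adj x c /\
                          a <> b /\ b <> c /\ a <> c.

Definition is_ray {V : Type} (adj : V -> V -> Prop) (o : V) (z : nat -> V)
  : Prop :=
  z 0%nat = o /\
  forall i, adj (z i) (z (S i)) /\ z i <> z (S i) /\
            z (S i) <> z (S (S i)) /\ z i <> z (S (S i)).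

Definition on_geod {V : Type} (adj : V -> V -> Prop) (x y w : V) : Prop :=
  (gdist adj x w + gdist adj w y = gdist adj x y)%nat.

(* [o,y]_xi : the vertex of xi on [o,y] farthest from o *)
Definition confl {V : Type} (adj : V -> V -> Prop) (o : V) (xi : nat -> V)
  (y : V) : V :=
  epsilon (inhabits o)
    (fun w => (exists k, w = xi k) /\ on_geod adj o y w /\
              forall k, on_geod adj o y (xi k) ->
                        (gdist adj o (xi k) <= gdist adj o w)%nat).

Definition height {V : Type} (adj : V -> V -> Prop) (o : V) (g : nat -> V)
  (y : V) : Z :=
  (Z.of_nat (gdist adj y (confl adj o g y)) -
   Z.of_nat (gdist adj o (confl adj o g y)))%Z.

Definition eventually_const {T : Type} (x : nat -> T) : Prop :=
  exists v N, forall n, (N <= n)%nat -> x n = v.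

Definition nat_to_infty (a : nat -> nat) : Prop :=
  forall M, exists N, forall n, (N <= n)%nat -> (M <= a n)%nat.

(* A sequence of vertices converges in the geometric compactification
   T-bar = T u dT: vertices are isolated (so convergence to a vertex means
   being eventually constant), and x_n -> xi in dT iff d(o,[o,x_n]_xi) -> oo. *)
Definition tbar_cvg {V : Type} (adj : V -> V -> Prop) (o : V) (x : nat -> V)
  : Prop :=
  eventually_const x \/
  exists xi, is_ray adj o xi /\
             nat_to_infty (fun n => gdist adj o (confl adj o xi (x n))).

(* Convergence in the two-point compactification Zbar = Z u {+oo,-oo}. *)
Definition zbar_cvg (a : nat -> Z) : Prop :=
  eventually_const a \/
  (forall M, exists N, forall n, (N <= n)%nat -> (M <= a n)%Z) \/
  (forall M, exists N, forall n, (N <= n)%nat -> (a n <= M)%Z).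

Section Horo.
Variables (V1 V2 : Type) (adj1 : V1 -> V1 -> Prop) (adj2 : V2 -> V2 -> Prop)
  (o1 : V1) (o2 : V2) (g1 : nat -> V1) (g2 : nat -> V2).

Definition inHP (p : V1 * V2) : Prop :=
  (height adj1 o1 g1 (fst p) + height adj2 o2 g2 (snd p) = 0)%Z.

Definition HP : Type := {p : V1 * V2 | inHP p}.

Definition adjHP (p q : V1 * V2) : Prop :=
  inHP p /\ inHP q /\ adj1 (fst p) (fst q) /\ adj2 (snd p) (snd q).

Definition dHP (p q : HP) : nat := gdist adjHP (proj1_sig p) (proj1_sig q).

Definition Phi (z : HP) (y : HP) : Z :=
  (Z.of_nat (gdist adjHP (proj1_sig z) (proj1_sig y)) -
   Z.of_nat (gdist adjHP (proj1_sig z) (o1, o2)))%Z.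

(* Psi(x) = (x^1, x^2, h_1(x^1)) converges in T1bar x T2bar x Zbar
   (product topology: componentwise convergence) *)
Definition Psi_cvg (x : nat -> HP) : Prop :=
  tbar_cvg adj1 o1 (fun n => fst (proj1_sig (x n))) /\
  tbar_cvg adj2 o2 (fun n => snd (proj1_sig (x n))) /\
  zbar_cvg (fun n => height adj1 o1 g1 (fst (proj1_sig (x n)))).

(* Phi(x_n) converges in the space of real functions on the vertex set,
   with the topology of pointwise convergence *)
Definition Phi_cvg (x : nat -> HP) : Prop :=
  exists f : HP -> R, forall y : HP,
    Un_cv (fun n => IZR (Phi (x n) y)) (f y).

End Horo.

(* Seen from the end [g] of a tree, height and distance combine into a Gromov
   product [horo x y = h x + h y - d x y] which is ultrametric.  In the
   horospheric product this gives the distance formula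
     d((p1,p2),(q1,q2)) = d1(p1,q1) + d2(p2,q2) - |h1(p1) - h1(q1)|,
   so the Busemann function of a vertex z splits into a Busemann function of z1
   in T1, one of z2 in T2, and the term |h1(z1) - b| - |h1(z1)| of the line Z.
   If Psi(x_n) converges, each of the three terms is eventually constant.
   Conversely, evaluating Phi(x_n) at two vertices that differ by swapping
   siblings in one factor shows that, for every vertex c, eventually x_n
   descends from c or eventually it does not; in a locally finite tree this
   forces convergence in the geometric compactification, and the remaining
   line term then forces convergence of the height in Zbar.  Degree at least 3
   provides the siblings and makes every integer a height. *)

From Stdlib Require Import List ZArith Reals Lia Lra ClassicalEpsilon Classical Wf_nat.
Import ListNotations.

Lemma exists_least_nat (P : nat -> Prop) :
  (exists n, P n) -> exists n, P n /\ forall m, P m -> (n <= m)%nat.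
Proof.
  intros Hex.
  destruct (dec_inh_nat_subset_has_unique_least_element P (fun n => classic (P n)) Hex)
    as [n [[Pn Hn] _]].
  eauto.
Qed.

Lemma walk_app {V : Type} (adj : V -> V -> Prop) x l1 y l2 z :
  walk adj x l1 y -> walk adj y l2 z -> walk adj x (l1 ++ l2) z.
Proof.
  revert x; induction l1 as [|a l1 IH]; simpl; intros x H1 H2.
  - now subst.
  - destruct H1; split; eauto.
Qed.

Lemma walk_of_seq {V : Type} (adj : V -> V -> Prop) (c : nat -> V) k : forall s,
  (forall i, (s <= i < s + k)%nat -> adj (c i) (c (S i))) ->
  walk adj (c s) (map c (seq (S s) k)) (c (s + k)%nat).
Proof.
  induction k as [|k IH]; intros s H; simpl.
  - f_equal; lia.
  - split; [apply H; lia|].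
    replace (s + S k)%nat with (S s + k)%nat by lia.
    apply IH; intros i Hi; apply H; lia.
Qed.

Lemma gdist_spec {V : Type} (adj : V -> V -> Prop) x y :
  (exists l, walk adj x l y) ->
  (exists l, walk adj x l y /\ length l = gdist adj x y) /\
  (forall l, walk adj x l y -> (gdist adj x y <= length l)%nat).
Proof.
  intros [l Hl]. unfold gdist. apply epsilon_spec.
  destruct (exists_least_nat (fun n => exists l, walk adj x l y /\ length l = n))
    as [n [Hn Hmin]]; [eauto|].
  exists n. split; [exact Hn|]. intros l' Hl'. apply Hmin. eauto.
Qed.

Definition ultimately (Q : nat -> Prop) : Prop :=
  exists N, forall n, (N <= n)%nat -> Q n.

Lemma ultimately_and (Q1 Q2 : nat -> Prop) :
  ultimately Q1 -> ultimately Q2 -> ultimately (fun n => Q1 n /\ Q2 n).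
Proof.
  intros [N1 H1] [N2 H2]. exists (N1 + N2)%nat.
  intros n Hn. split; [apply H1|apply H2]; lia.
Qed.

Lemma ultimately_mono (Q1 Q2 : nat -> Prop) :
  ultimately Q1 -> (forall n, Q1 n -> Q2 n) -> ultimately Q2.
Proof. intros [N H] HQ. exists N. auto. Qed.

Lemma ultimately_forall_in {A : Type} (R : A -> nat -> Prop) (s : list A) :
  (forall u, In u s -> ultimately (R u)) -> ultimately (fun n => forall u, In u s -> R u n).
Proof.
  induction s as [|a s IH]; intros H.
  - exists 0%nat. intros n _ u [].
  - apply (ultimately_mono _ _
      (ultimately_and _ _ (H a (or_introl eq_refl)) (IH (fun u Hu => H u (or_intror Hu))))).
    intros n [Ha Hs] u [<-|Hu]; auto.
Qed.

(** * Trees as metric spaces *)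

Section TreeMetric.
Variables (V : Type) (adj : V -> V -> Prop).
Hypothesis tree : is_tree adj.
Local Open Scope Z_scope.

Definition dist (x y : V) : Z := Z.of_nat (gdist adj x y).

Lemma adj_sym x y : adj x y -> adj y x.
Proof. apply tree. Qed.

Lemma adj_neq x y : adj x y -> x <> y.
Proof. intros H <-. exact (proj1 (proj2 tree) x H). Qed.

Lemma dist_realized x y : exists l, walk adj x l y /\ Z.of_nat (length l) = dist x y.
Proof.
  destruct (gdist_spec adj x y (proj1 (proj2 (proj2 tree)) x y)) as [[l [Hw Hl]] _].
  exists l. unfold dist. rewrite Hl. auto.
Qed.

Lemma dist_le_walk x y l : walk adj x l y -> dist x y <= Z.of_nat (length l).
Proof.
  intros H. destruct (gdist_spec adj x y (proj1 (proj2 (proj2 tree)) x y)) as [_ Hmin].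
  specialize (Hmin l H). unfold dist. lia.
Qed.

Lemma dist_nonneg x y : 0 <= dist x y.
Proof. unfold dist; lia. Qed.

Lemma walk_rev x l y : walk adj x l y -> exists l', walk adj y l' x /\ length l' = length l.
Proof.
  revert x. induction l as [|a l IH]; simpl; intros x H.
  - subst. now exists [].
  - destruct H as [Ha Hw]. destruct (IH _ Hw) as [l' [Hw' Hl']].
    exists (l' ++ [x]). split.
    + apply walk_app with a; simpl; auto using adj_sym.
    + rewrite length_app; simpl; lia.
Qed.

Lemma dist_sym x y : dist x y = dist y x.
Proof.
  assert (le : forall x y, dist y x <= dist x y).
  { intros a b. destruct (dist_realized a b) as [l [Hw Hl]].
    destruct (walk_rev _ _ _ Hw) as [l' [Hw' Hl']].
    pose proof (dist_le_walk _ _ _ Hw'). rewrite Hl' in H. lia. }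
  pose proof (le x y); pose proof (le y x); lia.
Qed.

Lemma dist_triangle x y z : dist x z <= dist x y + dist y z.
Proof.
  destruct (dist_realized x y) as [l1 [H1 E1]], (dist_realized y z) as [l2 [H2 E2]].
  pose proof (dist_le_walk _ _ _ (walk_app adj _ _ _ _ _ H1 H2)).
  rewrite length_app in H. lia.
Qed.

Lemma dist_refl x : dist x x = 0.
Proof. pose proof (dist_le_walk x x [] eq_refl). pose proof (dist_nonneg x x). simpl in *. lia. Qed.

Lemma dist_eq0 x y : dist x y = 0 -> x = y.
Proof.
  intros H. destruct (dist_realized x y) as [[|z l] [Hw Hl]]; simpl in *; auto. lia.
Qed.

Lemma dist_adj x y : adj x y -> dist x y = 1.
Proof.
  intros H. pose proof (dist_le_walk x y [y] (conj H eq_refl)). simpl in *.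
  assert (dist x y <> 0) by (intros E; exact (adj_neq _ _ H (dist_eq0 _ _ E))).
  pose proof (dist_nonneg x y). lia.
Qed.

Lemma exists_step_toward x y : 0 < dist x y -> exists z, adj x z /\ dist z y = dist x y - 1.
Proof.
  intros Hp. destruct (dist_realized x y) as [[|z l] [Hw Hl]]; simpl in *; [lia|].
  destruct Hw as [Ha Hw]. exists z. split; auto.
  pose proof (dist_le_walk _ _ _ Hw). pose proof (dist_triangle x z y).
  rewrite (dist_adj _ _ Ha) in H0. lia.
Qed.

Lemma exists_geodesic n : forall x w, dist x w = Z.of_nat n -> exists a : nat -> V,
  a 0%nat = x /\ (forall i, (i < n)%nat -> adj (a i) (a (S i))) /\
  (forall i, (i <= n)%nat -> dist (a i) w = Z.of_nat (n - i)).
Proof.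
  induction n as [|n IH]; intros x w H.
  - exists (fun _ => x). repeat split; [intros; lia|].
    intros i Hi. replace i with 0%nat by lia. auto.
  - destruct (exists_step_toward x w) as [z [Hz Ez]]; [lia|].
    destruct (IH z w) as [b [B0 [B1 B2]]]; [lia|].
    exists (fun i => match i with 0%nat => x | S i => b i end). repeat split.
    + intros [|i] Hi; [rewrite B0; auto | apply B1; lia].
    + intros [|i] Hi; [rewrite H; f_equal | rewrite B2 by lia; f_equal].
Qed.

Lemma no_closing_edge (c : nat -> V) (m : nat) : (2 <= m)%nat ->
  (forall i, (i < m)%nat -> adj (c i) (c (S i))) ->
  (forall i k, (i <= m)%nat -> (k <= m)%nat -> c i = c k -> i = k) ->
  ~ adj (c m) (c 0%nat).
Proof.
  intros Hm Ha Hinj.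
  assert (Hlast : last (map c (seq 1 m)) (c 0%nat) = c m).
  { destruct m; [lia|]. rewrite seq_S, map_app. simpl. now rewrite last_last. }
  rewrite <- Hlast. apply (proj2 (proj2 (proj2 tree))).
  - change (c 0%nat :: map c (seq 1 m)) with (map c (seq 0 (S m))).
    apply NoDup_map_NoDup_ForallPairs; [|apply seq_NoDup].
    intros a b Ha' Hb' E. apply in_seq in Ha', Hb'. apply Hinj; auto; lia.
  - rewrite length_map, length_seq. auto.
  - rewrite Hlast. replace m with (0 + m)%nat at 2 by lia.
    apply walk_of_seq. intros; apply Ha; lia.
Qed.

(* The path follows the geodesics from [x] and [y] to [w] up to the point where they meet. *)
Lemma equidistant_join x y w : x <> y -> dist x w = dist y w ->
  exists (c : nat -> V) (m : nat),
    (2 <= m)%nat /\ c 0%nat = x /\ c m = y /\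
    (forall i, (i < m)%nat -> adj (c i) (c (S i))) /\
    (forall i k, (i <= m)%nat -> (k <= m)%nat -> c i = c k -> i = k) /\
    (forall i, (i <= m)%nat -> dist (c i) w <= dist x w).
Proof.
  intros Hxy E.
  destruct (dist_realized x w) as [l0 [_ EN]].
  remember (length l0) as N eqn:EL. clear EL l0.
  destruct (exists_geodesic N x w) as [a [A0 [A1 A2]]]; [lia|].
  destruct (exists_geodesic N y w) as [b [B0 [B1 B2]]]; [lia|].
  assert (AN : a N = w) by (apply dist_eq0; rewrite A2 by lia; f_equal; lia).
  assert (BN : b N = w) by (apply dist_eq0; rewrite B2 by lia; f_equal; lia).
  destruct (exists_least_nat (fun j => (j <= N)%nat /\ a j = b j)) as [j [[Hj Hab] Hjmin]].
  { exists N; split; [lia|congruence]. }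
  assert (Hj0 : (j <> 0)%nat) by (intros ->; congruence).
  set (c i := if Nat.leb i j then a i else b (2 * j - i)%nat).
  assert (Dc : forall i, (i <= 2 * j)%nat ->
            dist (c i) w = Z.of_nat (N - Nat.min i (2 * j - i))).
  { intros i Hi. unfold c. destruct (Nat.leb_spec i j).
    - rewrite A2 by lia. do 2 f_equal. lia.
    - rewrite B2 by lia. do 2 f_equal. lia. }
  exists c, (2 * j)%nat. repeat split.
  - lia.
  - unfold c. simpl. auto.
  - unfold c. destruct (Nat.leb_spec (2 * j) j); [lia|].
    now replace (2 * j - 2 * j)%nat with 0%nat by lia.
  - intros i Hi. unfold c. destruct (Nat.leb_spec i j), (Nat.leb_spec (S i) j).
    + apply A1; lia.
    + replace i with j by lia. rewrite Hab. apply adj_sym.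
      replace (2 * j - S j)%nat with (j - 1)%nat by lia.
      replace (b j) with (b (S (j - 1))) by (f_equal; lia). apply B1; lia.
    + lia.
    + apply adj_sym. replace (2 * j - i)%nat with (S (2 * j - S i)) by lia. apply B1; lia.
  - intros i k Hi Hk Eik.
    assert (Hd : Nat.min i (2 * j - i) = Nat.min k (2 * j - k)).
    { pose proof (Dc i Hi) as Di. pose proof (Dc k Hk) as Dk. rewrite Eik in Di. lia. }
    unfold c in Eik. destruct (Nat.leb_spec i j), (Nat.leb_spec k j); try lia.
    + assert (i = 2 * j - k)%nat by lia. subst i.
      enough (j <= 2 * j - k)%nat by lia. apply Hjmin. split; [lia|auto].
    + assert (k = 2 * j - i)%nat by lia. subst k.
      enough (j <= 2 * j - i)%nat by lia. apply Hjmin. split; [lia|auto].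
  - intros i Hi. rewrite Dc by lia. lia.
Qed.

Lemma dist_adj_neq x y w : adj x y -> dist x w <> dist y w.
Proof.
  intros Ha E.
  destruct (equidistant_join x y w (adj_neq _ _ Ha) E) as [c [m [Hm [C0 [Cm [Cadj [Cinj _]]]]]]].
  apply (no_closing_edge c m Hm Cadj Cinj). rewrite C0, Cm. now apply adj_sym.
Qed.

Lemma dist_adj_pm1 x y w : adj x y -> dist y w = dist x w + 1 \/ dist y w = dist x w - 1.
Proof.
  intros Ha. pose proof (dist_adj_neq x y w Ha).
  pose proof (dist_triangle x y w). pose proof (dist_triangle y x w).
  rewrite (dist_adj _ _ Ha) in H0. rewrite (dist_adj _ _ (adj_sym _ _ Ha)) in H1. lia.
Qed.

Lemma step_toward_unique x u v w : adj x u -> adj x v ->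
  dist u w = dist x w - 1 -> dist v w = dist x w - 1 -> u = v.
Proof.
  intros Hu Hv Eu Ev. apply NNPP; intros Hne.
  destruct (equidistant_join u v w Hne ltac:(lia))
    as [c [m [Hm [C0 [Cm [Cadj [Cinj Cw]]]]]]].
  set (c' i := match i with 0%nat => x | S i => c i end).
  apply (no_closing_edge c' (S m)).
  - lia.
  - intros [|i] Hi; simpl; [rewrite C0; auto | apply Cadj; lia].
  - intros [|i] [|k] Hi Hk E; simpl in E; auto.
    + pose proof (Cw k ltac:(lia)). rewrite <- E in H. lia.
    + pose proof (Cw i ltac:(lia)). rewrite E in H. lia.
    + f_equal. apply Cinj; auto; lia.
  - simpl. rewrite Cm. now apply adj_sym.
Qed.

(** * Gromov products and geodesic rays *)

(* Twice the Gromov product [(x|y)_w]; the factor 2 keeps it integral. *)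
Definition gromov (w x y : V) : Z := dist x w + dist y w - dist x y.

Lemma gromov_sym w x y : gromov w x y = gromov w y x.
Proof. unfold gromov. rewrite (dist_sym x y). lia. Qed.

Lemma gromov_le w x y : gromov w x y <= 2 * dist y w /\ gromov w x y <= 2 * dist x w.
Proof.
  unfold gromov. pose proof (dist_triangle x y w). pose proof (dist_triangle y x w).
  rewrite (dist_sym y x) in H0. lia.
Qed.

Lemma gromov_le_dist w x y : gromov w x y <= 2 * dist w y.
Proof. rewrite dist_sym. apply gromov_le. Qed.

Lemma gromov_refl w x : gromov w x x = 2 * dist x w.
Proof. unfold gromov. rewrite dist_refl. lia. Qed.

Lemma gromov_step_toward w x y y' : adj y y' -> dist y' w = dist y w - 1 ->
  gromov w x y' = Z.min (gromov w x y) (2 * dist y' w).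
Proof.
  remember (Z.to_nat (dist x y)) as n eqn:En.
  revert x y y' En.
  induction n as [n IH] using (well_founded_induction lt_wf).
  intros x y y' En Ha Hd.
  pose proof (gromov_le w x y') as [Hle _].
  destruct (dist_adj_pm1 y y' x Ha) as [E|E]; rewrite (dist_sym y' x), (dist_sym y x) in E;
    [|unfold gromov in *; lia].
  destruct (Z.eq_dec (gromov w x y) (2 * dist y w)) as [Eq|Ne]; [unfold gromov in *; lia|].
  exfalso.
  assert (Hxy : 0 < dist y x).
  { destruct (Z.eq_dec (dist y x) 0) as [Z0|Z0].
    - apply dist_eq0 in Z0. subst. rewrite gromov_refl in Ne. lia.
    - pose proof (dist_nonneg y x). lia. }
  destruct (exists_step_toward y x Hxy) as [u [Hu Eu]].
  rewrite (dist_sym y x) in *.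
  destruct (dist_adj_pm1 y u w Hu) as [F|F].
  - assert (Hlt : (Z.to_nat (dist x u) < n)%nat) by (rewrite (dist_sym x u), Eu; lia).
    pose proof (IH _ Hlt x u y eq_refl (adj_sym _ _ Hu) ltac:(lia)).
    unfold gromov in *. rewrite (dist_sym x u), Eu in H. lia.
  - assert (u = y') by (apply (step_toward_unique y u y' w); auto; lia).
    subst u. rewrite (dist_sym y' x) in Eu. lia.
Qed.

Lemma gromov_ultra w x y z : Z.min (gromov w x y) (gromov w y z) <= gromov w x z.
Proof.
  remember (Z.to_nat (dist y z)) as n eqn:En. revert z En.
  induction n as [|n IH]; intros z En.
  - assert (dist y z = 0) by (pose proof (dist_nonneg y z); lia).
    apply dist_eq0 in H. subst. lia.
  - destruct (exists_step_toward z y) as [z' [Ha Ez]]; [rewrite dist_sym; lia|].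
    rewrite (dist_sym z' y), (dist_sym z y) in Ez.
    specialize (IH z' ltac:(lia)).
    destruct (dist_adj_pm1 z z' w Ha) as [F|F].
    + pose proof (gromov_step_toward w x z' z (adj_sym _ _ Ha) ltac:(lia)).
      pose proof (gromov_step_toward w y z' z (adj_sym _ _ Ha) ltac:(lia)).
      unfold gromov in *. lia.
    + pose proof (gromov_step_toward w x z z' Ha ltac:(lia)).
      pose proof (gromov_step_toward w y z z' Ha ltac:(lia)).
      unfold gromov in *. lia.
Qed.

Lemma gromov_even w x y : exists k, gromov w x y = 2 * k.
Proof.
  remember (Z.to_nat (dist x y)) as n eqn:En. revert x En.
  induction n as [|n IH]; intros x En.
  - assert (dist x y = 0) by (pose proof (dist_nonneg x y); lia).
    apply dist_eq0 in H. subst. rewrite gromov_refl. eauto.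
  - destruct (exists_step_toward x y) as [x' [Ha Ex]]; [lia|].
    destruct (IH x' ltac:(lia)) as [k Hk].
    destruct (dist_adj_pm1 x x' w Ha) as [F|F]; unfold gromov in *.
    + exists (k - 1). lia.
    + exists k. lia.
Qed.

Section Ray.
Variables (o : V) (xi : nat -> V).
Hypothesis ray : is_ray adj o xi.

Lemma dist_ray_shift m i : dist (xi i) (xi (i + m)%nat) = Z.of_nat m.
Proof.
  destruct ray as [_ R].
  enough (forall m i, dist (xi i) (xi (i + m)%nat) = Z.of_nat m /\
                      dist (xi i) (xi (i + S m)%nat) = Z.of_nat (S m)) by apply H.
  clear m i. induction m as [|m IH]; intros i.
  - rewrite Nat.add_0_r, Nat.add_1_r, dist_refl, dist_adj by apply R. auto.
  - destruct (IH i) as [H1 H2]. split; [auto|].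
    set (j := (i + m)%nat) in *.
    destruct (R j) as [_ [_ [_ Hjump]]]. destruct (R (S j)) as [Ha _].
    replace (i + S (S m))%nat with (S (S j)) by (unfold j; lia).
    replace (i + S m)%nat with (S j) in H2 by (unfold j; lia).
    rewrite (dist_sym (xi i)) in H1, H2 |- *.
    destruct (dist_adj_pm1 _ _ (xi i) Ha) as [F|F]; [lia|].
    exfalso. apply Hjump.
    apply (step_toward_unique (xi (S j)) (xi j) (xi (S (S j))) (xi i)); auto using adj_sym.
    + apply adj_sym, R.
    + lia.
Qed.

Lemma dist_base_ray k : dist o (xi k) = Z.of_nat k.
Proof. pose proof (dist_ray_shift k 0). destruct ray as [R0 _]. now rewrite R0 in H. Qed.

Lemma gdist_base_ray k : gdist adj o (xi k) = k.
Proof. pose proof (dist_base_ray k). unfold dist in H. lia. Qed.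

Lemma dist_ray a b : (a <= b)%nat -> dist (xi a) (xi b) = Z.of_nat b - Z.of_nat a.
Proof.
  intros Hab. pose proof (dist_ray_shift (b - a) a).
  replace (a + (b - a))%nat with b in H by lia. lia.
Qed.

Lemma gromov_ray_ray a b : gromov o (xi a) (xi b) = 2 * Z.of_nat (Nat.min a b).
Proof.
  unfold gromov. rewrite !(dist_sym _ o), !dist_base_ray.
  destruct (Nat.le_ge_cases a b).
  - rewrite dist_ray by auto. lia.
  - rewrite dist_sym, dist_ray by auto. lia.
Qed.

Lemma gromov_ray_le_maximal y k K : (k <= K)%nat ->
  gromov o (xi K) y = 2 * Z.of_nat K -> gromov o (xi k) y = 2 * Z.of_nat k.
Proof.
  intros Hk HK. pose proof (gromov_ultra o (xi k) (xi K) y).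
  rewrite gromov_ray_ray, HK in H.
  pose proof (gromov_le o (xi k) y) as [_ H2]. rewrite (dist_sym _ o), dist_base_ray in H2.
  lia.
Qed.

Lemma on_geod_ray_iff y k :
  on_geod adj o y (xi k) <-> gromov o (xi k) y = 2 * Z.of_nat k.
Proof.
  unfold on_geod, gromov. pose proof (dist_base_ray k) as E.
  rewrite (dist_sym (xi k) o), (dist_sym y o). unfold dist in *. split; intros; lia.
Qed.

Lemma confl_ray_spec y : exists K, confl adj o xi y = xi K /\
  gromov o (xi K) y = 2 * Z.of_nat K /\
  forall k, gromov o (xi k) y = 2 * Z.of_nat k -> (k <= K)%nat.
Proof.
  set (Q k := gromov o (xi k) y = 2 * Z.of_nat k).
  assert (Q0 : Q 0%nat).
  { unfold Q, gromov. destruct ray as [R0 _]. rewrite R0, dist_refl, dist_sym. lia. }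
  assert (Qbound : forall k, Q k -> (k <= Z.to_nat (dist o y))%nat).
  { intros k Hk. unfold Q in Hk. pose proof (gromov_le_dist o (xi k) y). lia. }
  destruct (exists_least_nat (fun m => forall k, Q k -> (k <= m)%nat)) as [K [HK HKmin]];
    [eauto|].
  assert (QK : Q K).
  { destruct K as [|K']; [exact Q0|]. apply NNPP. intros NQ.
    enough (forall k, Q k -> (k <= K')%nat) by (specialize (HKmin K' H); lia).
    intros k Hk. specialize (HK k Hk). destruct (Nat.eq_dec k (S K')); [subst; contradiction|lia]. }
  assert (Hw : exists w, (exists k, w = xi k) /\ on_geod adj o y w /\
     forall k, on_geod adj o y (xi k) -> (gdist adj o (xi k) <= gdist adj o w)%nat).
  { exists (xi K). split; [eauto|]. split; [now apply on_geod_ray_iff|].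
    intros k Hk. apply on_geod_ray_iff in Hk. rewrite !gdist_base_ray. auto. }
  destruct (epsilon_spec (inhabits o) _ Hw) as [[k Ek] [Hon Hmax]].
  fold (confl adj o xi y) in Ek, Hon, Hmax. rewrite Ek in Hon, Hmax |- *.
  apply on_geod_ray_iff in Hon.
  specialize (Hmax K (proj2 (on_geod_ray_iff y K) QK)). rewrite !gdist_base_ray in Hmax.
  replace k with K by (pose proof (HK k Hon); lia).
  exists K. auto.
Qed.

Lemma le_gdist_confl_iff y M :
  (M <= gdist adj o (confl adj o xi y))%nat <-> gromov o (xi M) y = 2 * Z.of_nat M.
Proof.
  destruct (confl_ray_spec y) as [K [E [HK Hmax]]].
  rewrite E, gdist_base_ray. split; intros H.
  - now apply (gromov_ray_le_maximal y M K).
  - now apply Hmax.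
Qed.

End Ray.

(** * Heights and descendants *)

Section Height.
Variables (o : V) (g : nat -> V).
Hypothesis ray : is_ray adj o g.
Local Notation h := (height adj o g).

(* Twice the Gromov product of [x] and [y] seen from the end [g]. *)
Definition horo (x y : V) : Z := h x + h y - dist x y.

Lemma height_confl y : exists K, gromov o (g K) y = 2 * Z.of_nat K /\
  (forall k, gromov o (g k) y = 2 * Z.of_nat k -> (k <= K)%nat) /\
  h y = dist o y - 2 * Z.of_nat K.
Proof.
  destruct (confl_ray_spec o g ray y) as [K [E [HK Hmax]]].
  exists K. split; [exact HK|split; [exact Hmax|]].
  unfold height. rewrite E. fold (dist y (g K)) (dist o (g K)).
  unfold gromov in HK. rewrite (dist_sym (g K) o), (dist_sym y o), dist_base_ray in HK by auto.
  rewrite (dist_base_ray o g ray), (dist_sym y). lia.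
Qed.

(* [h] is the Busemann function of [g]: [dist y (g k) - k] is constant
   once [k >= dist o y]. *)
Lemma height_eq_far y k : dist o y <= Z.of_nat k -> h y = dist y (g k) - Z.of_nat k.
Proof.
  intros Hk. destruct (height_confl y) as [K [HK [Hmax Hh]]].
  assert (KD : Z.of_nat K <= dist o y) by (pose proof (gromov_le_dist o (g K) y); lia).
  assert (E : gromov o (g k) y = 2 * Z.of_nat K).
  { pose proof (gromov_ultra o (g k) (g K) y) as U.
    rewrite gromov_ray_ray, HK, Nat.min_r in U by (auto; lia).
    destruct (Z.eq_dec (gromov o (g k) y) (2 * Z.of_nat K)) as [e|ne]; auto. exfalso.
    pose proof (gromov_le o (g k) y) as [_ Hk'].
    rewrite (dist_sym _ o), dist_base_ray in Hk' by auto.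
    assert (Kk : (K < k)%nat) by (destruct (Nat.eq_dec K k); [subst; lia | lia]).
    pose proof (gromov_ultra o (g (S K)) (g k) y) as U'.
    rewrite gromov_ray_ray, Nat.min_l in U' by (auto; lia).
    destruct (gromov_even o (g (S K)) y) as [j Hj].
    pose proof (gromov_le o (g (S K)) y) as [_ HSK].
    rewrite (dist_sym _ o), dist_base_ray in HSK by auto.
    specialize (Hmax (S K) ltac:(lia)). lia. }
  unfold gromov in E. rewrite (dist_sym (g k) o), (dist_sym y o), dist_base_ray in E by auto.
  rewrite (dist_sym y (g k)). lia.
Qed.

Lemma height_base : h o = 0.
Proof.
  rewrite (height_eq_far o 0); [|rewrite dist_refl; lia].
  destruct ray as [R0 _]. rewrite R0, dist_refl. lia.
Qed.

Lemma height_ray k : h (g k) = - Z.of_nat k.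
Proof. rewrite (height_eq_far (g k) k), dist_refl by (rewrite dist_base_ray by auto; lia). lia. Qed.

Lemma horo_gromov_far x y k : dist o x <= Z.of_nat k -> dist o y <= Z.of_nat k ->
  gromov (g k) x y = horo x y + 2 * Z.of_nat k.
Proof.
  intros. unfold gromov, horo. rewrite (height_eq_far x k), (height_eq_far y k) by auto. lia.
Qed.

Lemma horo_sym x y : horo x y = horo y x.
Proof. unfold horo. rewrite dist_sym. lia. Qed.

Lemma horo_refl x : horo x x = 2 * h x.
Proof. unfold horo. rewrite dist_refl. lia. Qed.

Lemma horo_ultra x y z : Z.min (horo x y) (horo y z) <= horo x z.
Proof.
  set (k := Z.to_nat (dist o x + dist o y + dist o z)).
  pose proof (dist_nonneg o x); pose proof (dist_nonneg o y); pose proof (dist_nonneg o z).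
  pose proof (gromov_ultra (g k) x y z).
  rewrite !(horo_gromov_far _ _ k) in H2 by (unfold k; lia). lia.
Qed.

Lemma horo_even x y : exists j, horo x y = 2 * j.
Proof.
  set (k := Z.to_nat (dist o x + dist o y)).
  pose proof (dist_nonneg o x); pose proof (dist_nonneg o y).
  destruct (gromov_even (g k) x y) as [j Hj].
  rewrite (horo_gromov_far _ _ k) in Hj by (unfold k; lia).
  exists (j - Z.of_nat k). lia.
Qed.

Lemma horo_le x y : horo x y <= 2 * h y /\ horo x y <= 2 * h x.
Proof.
  set (k := Z.to_nat (dist o x + dist o y)).
  pose proof (dist_nonneg o x); pose proof (dist_nonneg o y).
  pose proof (gromov_le (g k) x y) as [Hy Hx].
  rewrite (horo_gromov_far _ _ k) in Hx, Hy by (unfold k; lia).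
  rewrite (height_eq_far y k) by (unfold k; lia).
  rewrite (height_eq_far x k) by (unfold k; lia).
  split; lia.
Qed.

Lemma horo_eq_height x y : horo x y = 2 * h x -> horo x y = 2 * h y -> x = y.
Proof. unfold horo. intros. apply dist_eq0. lia. Qed.

Lemma height_adj x y : adj x y -> h y = h x + 1 \/ h y = h x - 1.
Proof.
  intros Ha. set (k := Z.to_nat (dist o x + 1)).
  pose proof (dist_nonneg o x). pose proof (dist_triangle o x y).
  rewrite (dist_adj _ _ Ha) in H0.
  rewrite (height_eq_far x k), (height_eq_far y k) by (unfold k; lia).
  destruct (dist_adj_pm1 x y (g k) Ha); lia.
Qed.

Lemma horo_adj x y : adj x y -> horo x y = 2 * Z.min (h x) (h y).
Proof. intros Ha. unfold horo. rewrite (dist_adj _ _ Ha). destruct (height_adj x y Ha); lia. Qed.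

Lemma exists_parent x : exists u, adj x u /\ h u = h x - 1.
Proof.
  set (k := Z.to_nat (dist o x + 1)). pose proof (dist_nonneg o x).
  assert (Hpos : 0 < dist x (g k)).
  { destruct (Z.eq_dec (dist x (g k)) 0) as [e|ne].
    - apply dist_eq0 in e.
      assert (dist o x = Z.of_nat k) by (rewrite e; apply (dist_base_ray o g ray)).
      unfold k in *. lia.
    - pose proof (dist_nonneg x (g k)). lia. }
  destruct (exists_step_toward x (g k) Hpos) as [u [Ha Eu]]. exists u. split; auto.
  pose proof (dist_triangle o x u). rewrite (dist_adj _ _ Ha) in H0.
  rewrite (height_eq_far u k), (height_eq_far x k) by (unfold k; lia). lia.
Qed.

Lemma horo_parent x u y : adj x u -> h u = h x - 1 -> horo u y = Z.min (horo x y) (2 * h u).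
Proof.
  intros Ha Eu.
  pose proof (horo_ultra x u y). pose proof (horo_ultra u x y).
  rewrite horo_adj in H by auto. rewrite horo_sym, horo_adj in H0 by auto.
  pose proof (horo_le u y) as [_ Hu]. pose proof (horo_le x y) as [_ Hx].
  destruct (horo_even u y) as [j Hj]. lia.
Qed.

Lemma horo_child x u y : adj x u -> h u = h x + 1 -> horo x y < 2 * h x ->
  horo u y = horo x y.
Proof.
  intros Ha Eu Hlt. pose proof (horo_parent u x y (adj_sym _ _ Ha) ltac:(lia)).
  pose proof (horo_le u y) as [_ Hu]. lia.
Qed.

Lemma horo_le_pred x y : horo x y <> 2 * h x -> horo x y <= 2 * h x - 2.
Proof. pose proof (horo_le x y) as [_ Hx]. destruct (horo_even x y) as [j Hj]. lia. Qed.

Lemma parent_unique x u v : adj x u -> adj x v -> h u = h x - 1 -> h v = h x - 1 -> u = v.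
Proof.
  intros Hu Hv Eu Ev. pose proof (horo_parent x u v Hu Eu).
  rewrite (horo_adj x v Hv) in H.
  apply horo_eq_height; lia.
Qed.

Lemma exists_child_other (deg : min_degree_ge3 adj) x v :
  exists u, adj x u /\ h u = h x + 1 /\ u <> v.
Proof.
  destruct (deg x) as [a [b [c [Ha [Hb [Hc [Hab [Hbc Hac]]]]]]]].
  assert (two_parents : forall p q, adj x p -> adj x q -> p <> q ->
            h p = h x - 1 -> h q = h x - 1 -> False)
    by (intros p q Hp Hq N Ep Eq; exact (N (parent_unique x p q Hp Hq Ep Eq))).
  assert (pick : forall p q, adj x p -> adj x q -> p <> q -> h p = h x + 1 -> h q = h x + 1 ->
            exists u, adj x u /\ h u = h x + 1 /\ u <> v)
    by (intros p q Hp Hq N Ep Eq; destruct (classic (p = v)); [subst; exists q | exists p]; auto).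
  destruct (height_adj x a Ha), (height_adj x b Hb), (height_adj x c Hc).
  all: first [ apply (pick a b); now auto | apply (pick a c); now auto
             | apply (pick b c); now auto | exfalso; apply (two_parents a b); now auto
             | exfalso; apply (two_parents a c); now auto
             | exfalso; apply (two_parents b c); now auto ].
Qed.

Lemma exists_child_toward x y : horo x y = 2 * h x -> x <> y ->
  exists u, adj x u /\ h u = h x + 1 /\ horo u y = 2 * h u.
Proof.
  intros E Ne.
  assert (Hpos : 0 < dist x y)
    by (pose proof (dist_nonneg x y); destruct (Z.eq_dec (dist x y) 0) as [e|];
        [apply dist_eq0 in e; contradiction | lia]).
  destruct (exists_step_toward x y Hpos) as [u [Ha Eu]]. exists u. split; auto.
  pose proof (horo_le u y) as [_ Hu]. unfold horo in *.
  destruct (height_adj x u Ha); lia.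
Qed.

Lemma gromov_base_horo a b : gromov o a b = horo a b - horo a o - horo b o.
Proof. unfold gromov, horo. rewrite height_base, !(dist_sym _ o). lia. Qed.

Lemma horo_ray_ray a b : horo (g a) (g b) = - 2 * Z.of_nat (Nat.max a b).
Proof.
  unfold horo. rewrite !height_ray. destruct (Nat.le_ge_cases a b).
  - rewrite (dist_ray o g ray a b) by auto. lia.
  - rewrite dist_sym, (dist_ray o g ray b a) by auto. lia.
Qed.

Lemma horo_ray_base a : horo (g a) o = - 2 * Z.of_nat a.
Proof. destruct ray as [R0 _]. rewrite <- R0, horo_ray_ray. lia. Qed.

Lemma horo_siblings p c c' : adj p c -> adj p c' -> h c = h p + 1 -> h c' = h p + 1 ->
  c <> c' -> horo c c' = 2 * h p.
Proof.
  intros Hc Hc' Ec Ec' N.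
  pose proof (horo_parent c p c' (adj_sym _ _ Hc) ltac:(lia)).
  rewrite (horo_adj p c' Hc') in H.
  assert (horo c c' <> 2 * h c) by (intros E; apply N, horo_eq_height; lia).
  pose proof (horo_le c c') as [_ Hle]. destruct (horo_even c c') as [j Hj]. lia.
Qed.

(* [x] descends from [c]: [c] lies on the geodesic ray from [x] to the end [g]. *)
Definition descendant (c x : V) : Prop := horo x c = 2 * h c.

Lemma descendant_refl c : descendant c c.
Proof. apply horo_refl. Qed.

Lemma descendant_trans p c x : descendant p c -> descendant c x -> descendant p x.
Proof.
  unfold descendant. intros H1 H2. pose proof (horo_ultra x c p).
  pose proof (horo_le c p) as [_ H3]. pose proof (horo_le x p) as [H4 _]. lia.
Qed.

Lemma descendant_child c u : adj c u -> h u = h c + 1 -> descendant c u.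
Proof. intros Ha E. unfold descendant. rewrite horo_sym, (horo_adj _ _ Ha). lia. Qed.

Lemma descendant_step c x : descendant c x -> x <> c ->
  exists u, adj c u /\ h u = h c + 1 /\ descendant u x.
Proof.
  unfold descendant. intros D N. rewrite horo_sym in D.
  destruct (exists_child_toward c x D (not_eq_sym N)) as [u [Ha [Eh Hu]]].
  exists u. rewrite horo_sym. auto.
Qed.

Lemma descendant_sibling_horo p c c' x : adj p c -> adj p c' ->
  h c = h p + 1 -> h c' = h p + 1 -> c <> c' ->
  (descendant c x -> horo x c - horo x c' = 2) /\
  (~ descendant c x -> horo x c - horo x c' <= 0).
Proof.
  intros Hc Hc' Ec Ec' N. pose proof (horo_siblings p c c' Hc Hc' Ec Ec' N) as S.
  unfold descendant. pose proof (horo_ultra x c c'). split; intros D.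
  - pose proof (horo_ultra c x c'). rewrite horo_sym in H0 at 1.
    destruct (horo_even x c') as [j Hj]. lia.
  - pose proof (horo_le x c) as [Hle _]. destruct (horo_even x c) as [j Hj]. lia.
Qed.

Lemma descendant_siblings_disjoint p c c' x : adj p c -> adj p c' ->
  h c = h p + 1 -> h c' = h p + 1 -> c <> c' -> descendant c x -> ~ descendant c' x.
Proof.
  intros Hc Hc' Ec Ec' N D D'.
  pose proof (proj1 (descendant_sibling_horo p c c' x Hc Hc' Ec Ec' N) D).
  pose proof (proj1 (descendant_sibling_horo p c' c x Hc' Hc Ec' Ec (not_eq_sym N)) D'). lia.
Qed.

Lemma gromov_ray_of_not_descendant k x :
  ~ descendant (g k) x -> gromov o (g (S k)) x = 2 * Z.of_nat (S k).
Proof.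
  unfold descendant. rewrite height_ray. intros ND.
  pose proof (horo_le x (g k)) as [H1 _]. rewrite height_ray in H1.
  destruct (horo_even x (g k)) as [j Hj].
  pose proof (horo_ultra x (g k) (g (S k))). rewrite horo_ray_ray, Nat.max_r in H by lia.
  pose proof (horo_le x (g (S k))) as [H2 _]. rewrite height_ray in H2.
  pose proof (horo_ultra x o (g k)). pose proof (horo_ray_base k). pose proof (horo_sym o (g k)).
  pose proof (horo_ultra x (g (S k)) o). pose proof (horo_ray_base (S k)).
  pose proof (horo_sym (g (S k)) o).
  rewrite gromov_base_horo, (horo_sym (g (S k)) x). lia.
Qed.

Lemma height_surjective (deg : min_degree_ge3 adj) t : exists v, h v = t.
Proof.
  assert (up : forall n : nat, exists v, h v = Z.of_nat n).
  { induction n as [|n [v Hv]]; [exists o; apply height_base|].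
    destruct (exists_child_other deg v v) as [u [_ [E _]]]. exists u. lia. }
  destruct (Z_le_gt_dec 0 t).
  - destruct (up (Z.to_nat t)) as [v Hv]. exists v. lia.
  - exists (g (Z.to_nat (- t))). rewrite height_ray. lia.
Qed.

(** * Convergence in the geometric compactification *)

(* Descent from [c] is read off [dist x c - dist x c'] for a sibling [c'] of [c]. *)
Lemma descendant_dichotomy (deg : min_degree_ge3 adj) (x : nat -> V) :
  (forall c c', h c = h c' -> exists v, ultimately (fun n => dist (x n) c - dist (x n) c' = v)) ->
  forall c, ultimately (fun n => descendant c (x n)) \/ ultimately (fun n => ~ descendant c (x n)).
Proof.
  intros Hconst c.
  destruct (exists_parent c) as [p [Hcp Ep]].
  destruct (exists_child_other deg p c) as [c' [Hpc' [Ec' Nc']]].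
  assert (Hpc : adj p c) by now apply adj_sym.
  destruct (Hconst c c' ltac:(lia)) as [v Hv].
  assert (Hd : ultimately (fun n => horo (x n) c - horo (x n) c' = - v))
    by (apply (ultimately_mono _ _ Hv); intros n E; unfold horo; lia).
  pose proof (fun n => descendant_sibling_horo p c c' (x n) Hpc Hpc' ltac:(lia) ltac:(lia)
                          (not_eq_sym Nc')) as S.
  destruct (Z.eq_dec (- v) 2) as [E2|N2].
  - left. apply (ultimately_mono _ _ Hd). intros n Hn. apply NNPP. intros ND.
    pose proof (proj2 (S n) ND). lia.
  - right. apply (ultimately_mono _ _ Hd). intros n Hn D.
    pose proof (proj1 (S n) D). lia.
Qed.

Section DescendantCriterion.
Hypothesis lf : locally_finite adj.
Variable x : nat -> V.
Hypothesis dichotomy : forall c,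
  ultimately (fun n => descendant c (x n)) \/ ultimately (fun n => ~ descendant c (x n)).

Lemma eventually_const_of_maximal_descendant c :
  ultimately (fun n => descendant c (x n)) ->
  (forall u, adj c u -> h u = h c + 1 -> ~ ultimately (fun n => descendant u (x n))) ->
  eventually_const x.
Proof.
  intros Hc Hchildren. destruct (lf c) as [s Hs].
  assert (E : ultimately (fun n => forall u, In u s ->
                 adj c u /\ h u = h c + 1 -> ~ descendant u (x n))).
  { apply (ultimately_forall_in (fun u n => adj c u /\ h u = h c + 1 -> ~ descendant u (x n))).
    intros u _. destruct (classic (adj c u /\ h u = h c + 1)) as [[Ha Eh]|NC].
    - destruct (dichotomy u) as [e|e]; [exfalso; exact (Hchildren u Ha Eh e)|].
      apply (ultimately_mono _ _ e). auto.
    - exists 0%nat. intros n _ C. contradiction. }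
  destruct (ultimately_and _ _ Hc E) as [N HN]. exists c, N. intros n Hn.
  destruct (HN n Hn) as [Dc Dch]. apply NNPP. intros Ne.
  destruct (descendant_step c (x n) Dc Ne) as [u [Ha [Eh Du]]].
  exact (Dch u (Hs u Ha) (conj Ha Eh) Du).
Qed.

Section GrowingChain.
Hypothesis grow : forall c, ultimately (fun n => descendant c (x n)) ->
  exists u, adj c u /\ h u = h c + 1 /\ ultimately (fun n => descendant u (x n)).
Variable k0 : nat.
Hypothesis k0_descendant : ultimately (fun n => descendant (g k0) (x n)).
Hypothesis k0_least : forall k, ultimately (fun n => descendant (g k) (x n)) -> (k0 <= k)%nat.

Definition next_branch (c : V) : V := epsilon (inhabits o)
  (fun u => adj c u /\ h u = h c + 1 /\ ultimately (fun n => descendant u (x n))).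

Definition branch (m : nat) : V := Nat.iter m next_branch (g k0).

Lemma branch_ultimately m : ultimately (fun n => descendant (branch m) (x n)).
Proof.
  induction m as [|m IH]; [exact k0_descendant|].
  exact (proj2 (proj2 (epsilon_spec (inhabits o) _ (grow _ IH)))).
Qed.

Lemma branch_adj m : adj (branch m) (branch (S m)) /\ h (branch (S m)) = h (branch m) + 1.
Proof.
  destruct (epsilon_spec (inhabits o) _ (grow _ (branch_ultimately m))) as [A [B _]]. auto.
Qed.

Lemma branch_height m : h (branch m) = Z.of_nat m - Z.of_nat k0.
Proof.
  induction m as [|m IH]; [simpl; rewrite height_ray; lia|].
  rewrite (proj2 (branch_adj m)). lia.
Qed.

Lemma branch_descendant m d : descendant (branch m) (branch (m + d)%nat).
Proof.
  induction d as [|d IH]; [rewrite Nat.add_0_r; apply descendant_refl|].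
  apply (descendant_trans _ (branch (m + d)%nat)); auto.
  replace (m + S d)%nat with (S (m + d)) by lia.
  apply descendant_child; apply branch_adj.
Qed.

(* By minimality of [k0], [branch 1] is not the child [g (k0 - 1)] of [g k0]
   through which the base point [o] descends. *)
Lemma base_not_descendant_branch1 : ~ descendant (branch 1) o.
Proof.
  intros D. destruct (Nat.eq_dec k0 0) as [Ek|Ek].
  - unfold descendant in D. rewrite branch_height in D.
    pose proof (horo_le o (branch 1)) as [_ H]. rewrite height_base in H. lia.
  - destruct ray as [_ R]. set (k := (k0 - 1)%nat).
    assert (Ek' : k0 = S k) by (unfold k; lia).
    assert (Ne : branch 1 <> g k)
      by (intros E; pose proof (k0_least k) as H; rewrite <- E in H;
          specialize (H (branch_ultimately 1)); lia).
    assert (A1 : adj (g (S k)) (branch 1)) by (rewrite <- Ek'; apply (branch_adj 0)).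
    assert (A2 : adj (g (S k)) (g k)) by apply adj_sym, R.
    apply (descendant_siblings_disjoint (g (S k)) (branch 1) (g k) o A1 A2); auto.
    + rewrite branch_height, !height_ray. lia.
    + rewrite !height_ray. lia.
    + unfold descendant. rewrite horo_sym, horo_ray_base, height_ray. lia.
Qed.

Lemma horo_base_branch m : horo o (branch m) = - 2 * Z.of_nat k0.
Proof.
  pose proof (branch_descendant 0 m) as D0. simpl plus in D0. unfold descendant in D0.
  pose proof (horo_ultra o (branch 0) (branch m)).
  pose proof (horo_ray_base k0). change (g k0) with (branch 0) in H0.
  rewrite (horo_sym o (branch 0)), (horo_sym (branch 0) (branch m)) in *.
  rewrite branch_height in D0.
  destruct m as [|m]; [rewrite horo_sym; exact H0|].
  destruct (horo_even o (branch (S m))) as [j Hj].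
  destruct (Z.le_gt_cases (horo o (branch (S m))) (- 2 * Z.of_nat k0)) as [L|L]; [lia|].
  exfalso. apply base_not_descendant_branch1. unfold descendant.
  pose proof (horo_ultra o (branch (S m)) (branch 1)).
  pose proof (branch_descendant 1 m) as D1. simpl plus in D1. unfold descendant in D1.
  pose proof (horo_le o (branch 1)) as [H4 _]. pose proof (branch_height 1).
  rewrite branch_height in D1. lia.
Qed.

Lemma dist_base_branch m : dist o (branch m) = Z.of_nat m + Z.of_nat k0.
Proof.
  pose proof (horo_base_branch m). unfold horo in H.
  rewrite height_base, branch_height in H. lia.
Qed.

Definition branch_ray (i : nat) : V := if Nat.leb i k0 then g i else branch (i - k0).

Lemma branch_ray_shift m : branch_ray (k0 + m) = branch m.
Proof.
  unfold branch_ray. destruct (Nat.leb_spec (k0 + m) k0).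
  - replace m with 0%nat by lia. now rewrite Nat.add_0_r.
  - f_equal. lia.
Qed.

Lemma branch_ray_is_ray : is_ray adj o branch_ray.
Proof.
  assert (Hdist : forall i, dist o (branch_ray i) = Z.of_nat i).
  { intros i. unfold branch_ray. destruct (Nat.leb_spec i k0).
    - apply (dist_base_ray o g ray).
    - rewrite dist_base_branch. lia. }
  assert (Hinj : forall i j, i <> j -> branch_ray i <> branch_ray j)
    by (intros i j N E; pose proof (Hdist i); pose proof (Hdist j); rewrite E in *; lia).
  split; [unfold branch_ray; apply ray|].
  intros i. split; [|split; [apply Hinj; lia | split; apply Hinj; lia]].
  destruct (Nat.lt_ge_cases i k0).
  - unfold branch_ray. destruct (Nat.leb_spec i k0), (Nat.leb_spec (S i) k0); try lia.
    apply ray.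
  - replace i with (k0 + (i - k0))%nat by lia.
    replace (S (k0 + (i - k0))) with (k0 + S (i - k0))%nat by lia.
    rewrite !branch_ray_shift. apply branch_adj.
Qed.

Lemma tbar_cvg_along_branch : tbar_cvg adj o x.
Proof.
  right. exists branch_ray. split; [apply branch_ray_is_ray|].
  intros M. destruct (branch_ultimately (S M)) as [N HN]. exists N. intros n Hn.
  apply (le_gdist_confl_iff o branch_ray branch_ray_is_ray).
  apply (gromov_ray_le_maximal o branch_ray branch_ray_is_ray (x n) M (k0 + S M)); [lia|].
  rewrite branch_ray_shift. specialize (HN n Hn). unfold descendant in HN.
  rewrite branch_height in HN.
  rewrite gromov_base_horo, (horo_sym (branch (S M)) o), horo_base_branch.
  pose proof (horo_ultra (x n) (branch (S M)) o).
  pose proof (horo_ultra (branch (S M)) (x n) o).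
  rewrite (horo_sym (branch (S M)) o), horo_base_branch in *.
  rewrite (horo_sym (branch (S M)) (x n)) in *. lia.
Qed.

End GrowingChain.

Lemma tbar_cvg_of_descendant_dichotomy : tbar_cvg adj o x.
Proof.
  destruct (classic (forall k, ultimately (fun n => ~ descendant (g k) (x n)))) as [Hnot|Hsome].
  - right. exists g. split; [exact ray|]. intros [|M]; [exists 0%nat; lia|].
    destruct (Hnot M) as [N HN]. exists N. intros n Hn.
    apply (le_gdist_confl_iff o g ray), gromov_ray_of_not_descendant, HN, Hn.
  - assert (Hk : exists k, ultimately (fun n => descendant (g k) (x n))).
    { apply not_all_ex_not in Hsome as [k Hk]. exists k.
      destruct (dichotomy (g k)); [auto|contradiction]. }
    destruct (exists_least_nat _ Hk) as [k0 [Hk0 Hk0min]].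
    destruct (classic (forall c, ultimately (fun n => descendant c (x n)) ->
      exists u, adj c u /\ h u = h c + 1 /\ ultimately (fun n => descendant u (x n))))
      as [grow|Hstop].
    + exact (tbar_cvg_along_branch grow k0 Hk0 Hk0min).
    + left. apply not_all_ex_not in Hstop as [c Hc].
      apply imply_to_and in Hc as [Hc Hnone].
      apply (eventually_const_of_maximal_descendant c Hc).
      intros u Ha Eh Hu. apply Hnone. eauto.
Qed.

End DescendantCriterion.

End Height.

Lemma busemann_ultimately_const o x : tbar_cvg adj o x ->
  forall y, exists v, ultimately (fun n => dist (x n) y - dist (x n) o = v).
Proof.
  intros [[v [N HN]] | [xi [R Hcvg]]] y.
  - exists (dist v y - dist v o), N. intros n Hn. now rewrite HN.
  - set (M := S (Z.to_nat (dist o y))).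
    destruct (Hcvg M) as [N HN].
    exists (dist y o - gromov o (xi M) y), N. intros n Hn.
    (* [x n] follows [xi] beyond [dist o y], so it branches off from [y]
       where [xi M] does. *)
    pose proof (proj1 (le_gdist_confl_iff o xi R (x n) M) (HN n Hn)) as Hfar.
    pose proof (gromov_ultra o (x n) (xi M) y). pose proof (gromov_ultra o (xi M) (x n) y).
    pose proof (gromov_le_dist o (xi M) y). pose proof (gromov_le_dist o (x n) y).
    rewrite (gromov_sym o (x n) (xi M)) in H.
    assert (gromov o (x n) y = gromov o (xi M) y) by (unfold M in *; lia).
    unfold gromov in *. lia.
Qed.

End TreeMetric.

(** * The metric of the horospheric product *)

Section HoroProduct.
Variables (V1 V2 : Type) (adj1 : V1 -> V1 -> Prop) (adj2 : V2 -> V2 -> Prop)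
  (o1 : V1) (o2 : V2) (g1 : nat -> V1) (g2 : nat -> V2).
Hypotheses (tree1 : is_tree adj1) (tree2 : is_tree adj2)
  (ray1 : is_ray adj1 o1 g1) (ray2 : is_ray adj2 o2 g2)
  (deg1 : min_degree_ge3 adj1) (deg2 : min_degree_ge3 adj2).
Local Open Scope Z_scope.
Local Notation h1 := (height adj1 o1 g1).
Local Notation h2 := (height adj2 o2 g2).
Local Notation horo1 := (horo V1 adj1 o1 g1).
Local Notation horo2 := (horo V2 adj2 o2 g2).
Local Notation dist1 := (dist V1 adj1).
Local Notation dist2 := (dist V2 adj2).
Local Notation inH := (inHP V1 V2 adj1 adj2 o1 o2 g1 g2).
Local Notation adjH := (adjHP V1 V2 adj1 adj2 o1 o2 g1 g2).

Definition hp_dist (p q : V1 * V2) : Z :=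
  dist1 (fst p) (fst q) + dist2 (snd p) (snd q) - Z.abs (h1 (fst p) - h1 (fst q)).

Lemma hp_dist_horo p1 p2 q1 q2 : inH (p1, p2) -> inH (q1, q2) ->
  hp_dist (p1, p2) (q1, q2) = - horo1 p1 q1 - horo2 p2 q2 - Z.abs (h1 p1 - h1 q1).
Proof. unfold inHP, hp_dist, horo. simpl. lia. Qed.

Lemma hp_dist_refl p : hp_dist p p = 0.
Proof. unfold hp_dist. rewrite !dist_refl by auto. lia. Qed.

Lemma hp_dist_nonneg_eq0 p q : inH p -> inH q -> 0 <= hp_dist p q /\ (hp_dist p q = 0 -> p = q).
Proof.
  destruct p as [p1 p2], q as [q1 q2]. intros Hp Hq.
  rewrite hp_dist_horo by auto. unfold inHP in Hp, Hq. simpl in Hp, Hq.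
  pose proof (horo_le _ _ tree1 _ _ ray1 p1 q1). pose proof (horo_le _ _ tree2 _ _ ray2 p2 q2).
  split; [lia|]. intros E.
  f_equal; [apply (horo_eq_height _ _ tree1 o1 g1) | apply (horo_eq_height _ _ tree2 o2 g2)]; lia.
Qed.

Lemma hp_dist_adj_ge p p' q : adjH p p' -> inH q -> hp_dist p q <= hp_dist p' q + 1.
Proof.
  destruct p as [p1 p2], p' as [p1' p2'], q as [q1 q2].
  intros [Hp [Hp' [A1 A2]]] Hq. rewrite !hp_dist_horo by auto.
  unfold inHP in Hp, Hp', Hq. simpl in *.
  pose proof (horo_le _ _ tree1 _ _ ray1 p1 q1). pose proof (horo_le _ _ tree1 _ _ ray1 p1' q1).
  pose proof (horo_le _ _ tree2 _ _ ray2 p2 q2). pose proof (horo_le _ _ tree2 _ _ ray2 p2' q2).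
  pose proof (horo_even _ _ tree1 _ _ ray1 p1' q1).
  pose proof (horo_even _ _ tree2 _ _ ray2 p2' q2).
  destruct (height_adj _ _ tree1 _ _ ray1 _ _ A1).
  - pose proof (horo_parent _ _ tree1 _ _ ray1 p1' p1 q1 (adj_sym _ _ tree1 _ _ A1) ltac:(lia)).
    pose proof (horo_parent _ _ tree2 _ _ ray2 p2 p2' q2 A2 ltac:(lia)). lia.
  - pose proof (horo_parent _ _ tree1 _ _ ray1 p1 p1' q1 A1 ltac:(lia)).
    pose proof (horo_parent _ _ tree2 _ _ ray2 p2' p2 q2 (adj_sym _ _ tree2 _ _ A2) ltac:(lia)).
    lia.
Qed.


Lemma hp_adj_step p1 p2 q u1 u2 : inH (p1, p2) -> adj1 p1 u1 -> adj2 p2 u2 ->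
  h1 u1 + h2 u2 = 0 -> hp_dist (u1, u2) q = hp_dist (p1, p2) q - 1 ->
  exists p', adjH (p1, p2) p' /\ hp_dist p' q = hp_dist (p1, p2) q - 1.
Proof. intros Hp A1 A2 Hu E. exists (u1, u2). repeat split; auto. Qed.

Lemma hp_dist_descent_up_fst p1 p2 q1 q2 : inH (p1, p2) -> inH (q1, q2) ->
  horo1 p1 q1 = 2 * h1 p1 -> horo2 p2 q2 <= 2 * h2 p2 - 2 ->
  exists p', adjH (p1, p2) p' /\ hp_dist p' (q1, q2) = hp_dist (p1, p2) (q1, q2) - 1.
Proof.
  intros Hp Hq E1 N2. unfold inHP in Hp, Hq. simpl in Hp, Hq.
  destruct (exists_parent _ _ tree2 _ _ ray2 p2) as [u2 [A2 Eu2]].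
  pose proof (horo_parent _ _ tree2 _ _ ray2 _ _ q2 A2 Eu2).
  destruct (classic (p1 = q1)) as [<-|Nq].
  - destruct (exists_child_other _ _ tree1 _ _ ray1 deg1 p1 p1) as [u1 [A1 [Eu1 _]]].
    pose proof (horo_adj _ _ tree1 _ _ ray1 _ _ A1).
    apply (hp_adj_step _ _ _ u1 u2); auto; [lia|].
    rewrite !hp_dist_horo, (horo_sym _ _ tree1 _ _ u1) by (unfold inHP; simpl; lia). lia.
  - destruct (exists_child_toward _ _ tree1 _ _ ray1 p1 q1 E1 Nq) as [u1 [A1 [Eu1 Hu1]]].
    pose proof (horo_le _ _ tree1 _ _ ray1 p1 q1).
    assert (h1 p1 <> h1 q1) by (intros E; apply Nq, (horo_eq_height _ _ tree1 o1 g1); lia).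
    apply (hp_adj_step _ _ _ u1 u2); auto; [lia|].
    rewrite !hp_dist_horo by (unfold inHP; simpl; lia). lia.
Qed.

Lemma hp_dist_descent_up_snd p1 p2 q1 q2 : inH (p1, p2) -> inH (q1, q2) ->
  horo1 p1 q1 <= 2 * h1 p1 - 2 -> horo2 p2 q2 = 2 * h2 p2 ->
  exists p', adjH (p1, p2) p' /\ hp_dist p' (q1, q2) = hp_dist (p1, p2) (q1, q2) - 1.
Proof.
  intros Hp Hq N1 E2. unfold inHP in Hp, Hq. simpl in Hp, Hq.
  destruct (exists_parent _ _ tree1 _ _ ray1 p1) as [u1 [A1 Eu1]].
  pose proof (horo_parent _ _ tree1 _ _ ray1 _ _ q1 A1 Eu1).
  destruct (classic (p2 = q2)) as [<-|Nq].
  - destruct (exists_child_other _ _ tree2 _ _ ray2 deg2 p2 p2) as [u2 [A2 [Eu2 _]]].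
    pose proof (horo_adj _ _ tree2 _ _ ray2 _ _ A2).
    apply (hp_adj_step _ _ _ u1 u2); auto; [lia|].
    rewrite !hp_dist_horo, (horo_sym _ _ tree2 _ _ u2) by (unfold inHP; simpl; lia). lia.
  - destruct (exists_child_toward _ _ tree2 _ _ ray2 p2 q2 E2 Nq) as [u2 [A2 [Eu2 Hu2]]].
    pose proof (horo_le _ _ tree2 _ _ ray2 p2 q2).
    assert (h2 p2 <> h2 q2) by (intros E; apply Nq, (horo_eq_height _ _ tree2 o2 g2); lia).
    apply (hp_adj_step _ _ _ u1 u2); auto; [lia|].
    rewrite !hp_dist_horo by (unfold inHP; simpl; lia). lia.
Qed.

Lemma hp_dist_descent_level p1 p2 q1 q2 : inH (p1, p2) -> inH (q1, q2) ->
  horo1 p1 q1 <= 2 * h1 p1 - 2 -> horo2 p2 q2 <= 2 * h2 p2 - 2 ->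
  exists p', adjH (p1, p2) p' /\ hp_dist p' (q1, q2) = hp_dist (p1, p2) (q1, q2) - 1.
Proof.
  intros Hp Hq N1 N2. unfold inHP in Hp, Hq. simpl in Hp, Hq.
  destruct (Z_le_gt_dec (h1 p1) (h1 q1)).
  - destruct (exists_parent _ _ tree1 _ _ ray1 p1) as [u1 [A1 Eu1]].
    destruct (exists_child_other _ _ tree2 _ _ ray2 deg2 p2 p2) as [u2 [A2 [Eu2 _]]].
    pose proof (horo_parent _ _ tree1 _ _ ray1 _ _ q1 A1 Eu1).
    pose proof (horo_child _ _ tree2 _ _ ray2 _ _ q2 A2 Eu2 ltac:(lia)).
    apply (hp_adj_step _ _ _ u1 u2); auto; [lia|].
    rewrite !hp_dist_horo by (unfold inHP; simpl; lia). lia.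
  - destruct (exists_child_other _ _ tree1 _ _ ray1 deg1 p1 p1) as [u1 [A1 [Eu1 _]]].
    destruct (exists_parent _ _ tree2 _ _ ray2 p2) as [u2 [A2 Eu2]].
    pose proof (horo_child _ _ tree1 _ _ ray1 _ _ q1 A1 Eu1 ltac:(lia)).
    pose proof (horo_parent _ _ tree2 _ _ ray2 _ _ q2 A2 Eu2).
    apply (hp_adj_step _ _ _ u1 u2); auto; [lia|].
    rewrite !hp_dist_horo by (unfold inHP; simpl; lia). lia.
Qed.

Lemma hp_dist_descent p q : inH p -> inH q -> p <> q ->
  exists p', adjH p p' /\ hp_dist p' q = hp_dist p q - 1.
Proof.
  destruct p as [p1 p2], q as [q1 q2]. intros Hp Hq Ne.
  destruct (Z.eq_dec (horo1 p1 q1) (2 * h1 p1)) as [E1|N1],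
           (Z.eq_dec (horo2 p2 q2) (2 * h2 p2)) as [E2|N2];
    try apply horo_le_pred in N1; try apply horo_le_pred in N2; auto.
  - exfalso. apply Ne, hp_dist_nonneg_eq0; auto.
    pose proof (horo_le _ _ tree1 _ _ ray1 p1 q1). pose proof (horo_le _ _ tree2 _ _ ray2 p2 q2).
    unfold inHP in Hp, Hq. simpl in Hp, Hq. rewrite hp_dist_horo by auto. lia.
  - now apply hp_dist_descent_up_fst.
  - now apply hp_dist_descent_up_snd.
  - now apply hp_dist_descent_level.
Qed.

Lemma hp_dist_le_walk l : forall p q, inH p -> inH q -> walk adjH p l q ->
  hp_dist p q <= Z.of_nat (length l).
Proof.
  induction l as [|p' l IH]; intros p q Hp Hq W; simpl in *.
  - subst. rewrite hp_dist_refl. lia.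
  - destruct W as [A W]. pose proof (IH p' q (proj1 (proj2 A)) Hq W).
    pose proof (hp_dist_adj_ge p p' q A Hq). lia.
Qed.

Lemma hp_walk_of_dist n : forall p q, inH p -> inH q -> hp_dist p q = Z.of_nat n ->
  exists l, walk adjH p l q /\ length l = n.
Proof.
  induction n as [|n IH]; intros p q Hp Hq E.
  - exists []. split; auto. apply (proj2 (hp_dist_nonneg_eq0 p q Hp Hq)). lia.
  - assert (p <> q) by (intros <-; rewrite hp_dist_refl in E; lia).
    destruct (hp_dist_descent p q Hp Hq H) as [p' [A Ep']].
    destruct (IH p' q (proj1 (proj2 A)) Hq ltac:(lia)) as [l [W Hl]].
    exists (p' :: l). simpl. auto.
Qed.

Lemma gdist_adjHP p q : inH p -> inH q -> Z.of_nat (gdist adjH p q) = hp_dist p q.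
Proof.
  intros Hp Hq. pose proof (proj1 (hp_dist_nonneg_eq0 p q Hp Hq)).
  destruct (hp_walk_of_dist (Z.to_nat (hp_dist p q)) p q Hp Hq ltac:(lia)) as [l [W Hl]].
  destruct (gdist_spec adjH p q (ex_intro _ l W)) as [[l' [W' Hl']] Hmin].
  pose proof (Hmin l W). pose proof (hp_dist_le_walk l' p q Hp Hq W'). lia.
Qed.

End HoroProduct.

(** * Integer sequences and the two-point compactification *)

Section IntegerSequences.
Local Open Scope Z_scope.

Lemma ultimately_const_of_Un_cv (u : nat -> Z) l :
  Un_cv (fun n => IZR (u n)) l -> exists v, ultimately (fun n => u n = v).
Proof.
  intros H. destruct (H (1/2)%R) as [N HN]; [lra|].
  exists (u N), N. intros n Hn.
  pose proof (HN n Hn) as A. pose proof (HN N (Nat.le_refl N)) as B. unfold R_dist in *.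
  apply Rabs_def2 in A, B. destruct A, B.
  assert (C1 : (IZR (u n - u N) < IZR 1)%R) by (rewrite minus_IZR; lra).
  assert (C2 : (IZR (-1) < IZR (u n - u N))%R) by (rewrite minus_IZR; lra).
  apply lt_IZR in C1, C2. lia.
Qed.

Lemma Un_cv_of_ultimately_const (u : nat -> Z) v :
  ultimately (fun n => u n = v) -> Un_cv (fun n => IZR (u n)) (IZR v).
Proof.
  intros [N HN] eps Heps. exists N. intros n Hn. rewrite HN by lia.
  unfold R_dist. now rewrite Rminus_diag, Rabs_R0.
Qed.

Lemma zbar_cvg_opp (a : nat -> Z) : zbar_cvg (fun n => - a n) -> zbar_cvg a.
Proof.
  intros [[v [N HN]] | [Hp | Hm]].
  - left. exists (- v), N. intros n Hn. specialize (HN n Hn). lia.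
  - right; right. intros M. destruct (Hp (- M)) as [N HN].
    exists N. intros n Hn. specialize (HN n Hn). lia.
  - right; left. intros M. destruct (Hm (- M)) as [N HN].
    exists N. intros n Hn. specialize (HN n Hn). lia.
Qed.

(* On [0, +oo), [t |-> |t - b| - |t|] is injective below [b] and constant above it. *)
Lemma zbar_cvg_of_busemann_nonneg (a : nat -> Z) :
  ultimately (fun n => 0 <= a n) ->
  (forall b, exists v, ultimately (fun n => Z.abs (a n - b) - Z.abs (a n) = v)) ->
  zbar_cvg a.
Proof.
  intros Hnonneg Hbus.
  destruct (classic (forall M, exists N, forall n, (N <= n)%nat -> M <= a n)) as [Hinf|Hfin];
    [right; left; exact Hinf|].
  apply not_all_ex_not in Hfin as [M HM]. set (b := Z.max M 0).
  destruct (Hbus b) as [v Hv].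
  destruct (ultimately_and _ _ Hnonneg Hv) as [N HN].
  assert (Hlow : exists m, (N <= m)%nat /\ a m < b).
  { apply NNPP. intros Hno. apply HM. exists N. intros n Hn.
    destruct (Z_lt_le_dec (a n) b); [exfalso; eauto | unfold b in *; lia]. }
  destruct Hlow as [m [Hm Hlt]].
  left. exists (a m), N. intros n Hn.
  destruct (HN n Hn), (HN m Hm). lia.
Qed.

Lemma zbar_cvg_iff_busemann (a : nat -> Z) :
  zbar_cvg a <->
  forall b, exists v, ultimately (fun n => Z.abs (a n - b) - Z.abs (a n) = v).
Proof.
  split.
  - intros [[c [N HN]] | [Hp | Hm]] b.
    + exists (Z.abs (c - b) - Z.abs c), N. intros n Hn. now rewrite HN.
    + destruct (Hp (Z.max b 0)) as [N HN]. exists (- b), N.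
      intros n Hn. specialize (HN n Hn). lia.
    + destruct (Hm (Z.min b 0)) as [N HN]. exists b, N.
      intros n Hn. specialize (HN n Hn). lia.
  - intros Hbus. destruct (Hbus 1) as [s [N HN]].
    pose proof (HN N (Nat.le_refl N)) as HsN.
    destruct (Z_le_gt_dec 1 (a N)).
    + apply zbar_cvg_of_busemann_nonneg; [|exact Hbus].
      exists N. intros n Hn. specialize (HN n Hn). lia.
    + apply zbar_cvg_opp, zbar_cvg_of_busemann_nonneg.
      * exists N. intros n Hn. specialize (HN n Hn). lia.
      * intros b. destruct (Hbus (- b)) as [v Hv]. exists v.
        apply (ultimately_mono _ _ Hv). intros n E. lia.
Qed.

End IntegerSequences.

(** * Busemann versus height compactification *)

Section BusemannHeight.
Variables (V1 V2 : Type) (adj1 : V1 -> V1 -> Prop) (adj2 : V2 -> V2 -> Prop)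
  (o1 : V1) (o2 : V2) (g1 : nat -> V1) (g2 : nat -> V2).
Hypotheses (tree1 : is_tree adj1) (tree2 : is_tree adj2)
  (lf1 : locally_finite adj1) (lf2 : locally_finite adj2)
  (deg1 : min_degree_ge3 adj1) (deg2 : min_degree_ge3 adj2)
  (ray1 : is_ray adj1 o1 g1) (ray2 : is_ray adj2 o2 g2).
Local Open Scope Z_scope.
Local Notation h1 := (height adj1 o1 g1).
Local Notation h2 := (height adj2 o2 g2).
Local Notation dist1 := (dist V1 adj1).
Local Notation dist2 := (dist V2 adj2).
Local Notation inH := (inHP V1 V2 adj1 adj2 o1 o2 g1 g2).
Local Notation HPt := (HP V1 V2 adj1 adj2 o1 o2 g1 g2).
Local Notation PhiF := (Phi V1 V2 adj1 adj2 o1 o2 g1 g2).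
Local Notation pt1 z := (fst (proj1_sig z)).
Local Notation pt2 z := (snd (proj1_sig z)).

Lemma Phi_decompose (z y : HPt) : PhiF z y =
  (dist1 (pt1 z) (pt1 y) - dist1 (pt1 z) o1) + (dist2 (pt2 z) (pt2 y) - dist2 (pt2 z) o2) -
  (Z.abs (h1 (pt1 z) - h1 (pt1 y)) - Z.abs (h1 (pt1 z))).
Proof.
  assert (Ho : inH (o1, o2)).
  { unfold inHP. simpl. rewrite (height_base _ _ tree1 _ _ ray1), (height_base _ _ tree2 _ _ ray2).
    lia. }
  unfold Phi. rewrite !gdist_adjHP by (assumption || apply proj2_sig).
  unfold hp_dist. simpl. rewrite (height_base _ _ tree1 _ _ ray1). lia.
Qed.

Lemma Phi_sub_fst (z : HPt) c c' y2 (Hy : inH (c, y2)) (Hy' : inH (c', y2)) :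
  PhiF z (exist _ (c, y2) Hy) - PhiF z (exist _ (c', y2) Hy') = dist1 (pt1 z) c - dist1 (pt1 z) c'.
Proof.
  rewrite !Phi_decompose. unfold inHP in Hy, Hy'. simpl in *.
  replace (h1 c') with (h1 c) by lia. lia.
Qed.

Lemma Phi_sub_snd (z : HPt) c c' y1 (Hy : inH (y1, c)) (Hy' : inH (y1, c')) :
  PhiF z (exist _ (y1, c) Hy) - PhiF z (exist _ (y1, c') Hy') = dist2 (pt2 z) c - dist2 (pt2 z) c'.
Proof. rewrite !Phi_decompose. simpl. lia. Qed.

Variable x : nat -> HPt.

Lemma Phi_cvg_of_Psi_cvg :
  Psi_cvg V1 V2 adj1 adj2 o1 o2 g1 g2 x -> Phi_cvg V1 V2 adj1 adj2 o1 o2 g1 g2 x.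
Proof.
  intros [C1 [C2 C3]].
  assert (Hconst : forall y : HPt, exists v, ultimately (fun n => PhiF (x n) y = v)).
  { intros y.
    destruct (busemann_ultimately_const _ _ tree1 o1 _ C1 (pt1 y)) as [v1 E1].
    destruct (busemann_ultimately_const _ _ tree2 o2 _ C2 (pt2 y)) as [v2 E2].
    destruct (proj1 (zbar_cvg_iff_busemann _) C3 (h1 (pt1 y))) as [v3 E3].
    exists (v1 + v2 - v3).
    apply (ultimately_mono _ _ (ultimately_and _ _ (ultimately_and _ _ E1 E2) E3)).
    intros n [[A B] C]. rewrite Phi_decompose. lia. }
  exists (fun y => IZR (epsilon (inhabits 0) (fun v => ultimately (fun n => PhiF (x n) y = v)))).
  intros y. apply Un_cv_of_ultimately_const, epsilon_spec, Hconst.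
Qed.

Section Converse.
Hypothesis Phi_const : forall y : HPt, exists v, ultimately (fun n => PhiF (x n) y = v).

Lemma tbar_cvg_fst : tbar_cvg adj1 o1 (fun n => pt1 (x n)).
Proof.
  apply (tbar_cvg_of_descendant_dichotomy _ _ tree1 _ _ ray1 lf1).
  apply (descendant_dichotomy _ _ tree1 _ _ ray1 deg1). intros c c' E.
  destruct (height_surjective _ _ tree2 _ _ ray2 deg2 (- h1 c)) as [y2 Hy2].
  assert (Hy : inH (c, y2)) by (unfold inHP; simpl; lia).
  assert (Hy' : inH (c', y2)) by (unfold inHP; simpl; lia).
  destruct (Phi_const (exist _ _ Hy)) as [v Hv], (Phi_const (exist _ _ Hy')) as [v' Hv'].
  exists (v - v'). apply (ultimately_mono _ _ (ultimately_and _ _ Hv Hv')).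
  intros n [A B]. rewrite <- (Phi_sub_fst (x n) c c' y2 Hy Hy'). lia.
Qed.

Lemma tbar_cvg_snd : tbar_cvg adj2 o2 (fun n => pt2 (x n)).
Proof.
  apply (tbar_cvg_of_descendant_dichotomy _ _ tree2 _ _ ray2 lf2).
  apply (descendant_dichotomy _ _ tree2 _ _ ray2 deg2). intros c c' E.
  destruct (height_surjective _ _ tree1 _ _ ray1 deg1 (- h2 c)) as [y1 Hy1].
  assert (Hy : inH (y1, c)) by (unfold inHP; simpl; lia).
  assert (Hy' : inH (y1, c')) by (unfold inHP; simpl; lia).
  destruct (Phi_const (exist _ _ Hy)) as [v Hv], (Phi_const (exist _ _ Hy')) as [v' Hv'].
  exists (v - v'). apply (ultimately_mono _ _ (ultimately_and _ _ Hv Hv')).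
  intros n [A B]. rewrite <- (Phi_sub_snd (x n) c c' y1 Hy Hy'). lia.
Qed.

Lemma zbar_cvg_height : zbar_cvg (fun n => h1 (pt1 (x n))).
Proof.
  apply zbar_cvg_iff_busemann. intros b.
  destruct (height_surjective _ _ tree1 _ _ ray1 deg1 b) as [y1 Hy1].
  destruct (height_surjective _ _ tree2 _ _ ray2 deg2 (- b)) as [y2 Hy2].
  assert (Hy : inH (y1, y2)) by (unfold inHP; simpl; lia).
  destruct (Phi_const (exist _ _ Hy)) as [v Hv].
  destruct (busemann_ultimately_const _ _ tree1 o1 _ tbar_cvg_fst y1) as [v1 E1].
  destruct (busemann_ultimately_const _ _ tree2 o2 _ tbar_cvg_snd y2) as [v2 E2].
  exists (v1 + v2 - v).
  apply (ultimately_mono _ _ (ultimately_and _ _ (ultimately_and _ _ E1 E2) Hv)).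
  intros n [[A B] C]. rewrite Phi_decompose in C. simpl in C. lia.
Qed.

End Converse.

Lemma Psi_cvg_of_Phi_cvg :
  Phi_cvg V1 V2 adj1 adj2 o1 o2 g1 g2 x -> Psi_cvg V1 V2 adj1 adj2 o1 o2 g1 g2 x.
Proof.
  intros [f Hf].
  assert (Phi_const : forall y, exists v, ultimately (fun n => PhiF (x n) y = v))
    by (intros y; exact (ultimately_const_of_Un_cv _ _ (Hf y))).
  split; [|split].
  - exact (tbar_cvg_fst Phi_const).
  - exact (tbar_cvg_snd Phi_const).
  - exact (zbar_cvg_height Phi_const).
Qed.

End BusemannHeight.

Theorem mainTheorem1
  (V1 V2 : Type) (adj1 : V1 -> V1 -> Prop) (adj2 : V2 -> V2 -> Prop)
  (o1 : V1) (o2 : V2) (g1 : nat -> V1) (g2 : nat -> V2)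
  (T1tree : is_tree adj1) (T2tree : is_tree adj2)
  (T1lf : locally_finite adj1) (T2lf : locally_finite adj2)
  (T1deg : min_degree_ge3 adj1) (T2deg : min_degree_ge3 adj2)
  (g1ray : is_ray adj1 o1 g1) (g2ray : is_ray adj2 o2 g2) :
  forall x : nat -> HP V1 V2 adj1 adj2 o1 o2 g1 g2,
    Psi_cvg V1 V2 adj1 adj2 o1 o2 g1 g2 x <->
    Phi_cvg V1 V2 adj1 adj2 o1 o2 g1 g2 x.
Proof.
  intros x. split.
  - apply (Phi_cvg_of_Psi_cvg V1 V2 adj1 adj2 o1 o2 g1 g2 T1tree T2tree T1deg T2deg g1ray g2ray).
  - apply (Psi_cvg_of_Phi_cvg V1 V2 adj1 adj2 o1 o2 g1 g2
             T1tree T2tree T1lf T2lf T1deg T2deg g1ray g2ray).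
Qed.
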